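(* Let $Q$ be a right Leibniz algebra over $\mathbb{F}$, $L$ a subalgebra of $Q$, and $q\in Q$. Then $(L:q)$ is an ideal of $L$. Moreover, it is maximal among the ideals $I$ of $L$ such that $[I,q]\subseteq L$ and $[q,I]\subseteq L$, in the sense that every ideal $I$ of $L$ with $[I,q]\subseteq L$ and $[q,I]\subseteq L$ is contained in $(L:q)$.
   Context: A right Leibniz algebra satisfies $[x,[y,z]]=[[x,y],z]-[[x,z],y]$. Ideals of $L$: subspaces $I$ with $[I,L]\subseteq I$, $[L,I]\subseteq I$. For $x\in L$ let $R_x(u)=[u,x]$, $L_x(u)=[x,u]$ as operators on $Q$, and $\mathscr{A}(L)$ the associative algebra generated by $\{R_x,L_y:x,y\in L\}$. ${}_L(q)=\mathbb{F}q+\{\sum_{i=1}^n\xi_i(q):\xi_i\in\mathscr{A}(L),n\in\mathbb{N}\}$, and $(L:q)=\{x\in L:[x,{}_L(q)]\subseteq L,\ [{}_L(q),x]\subseteq L\}$. *)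

From HB Require Import structures.
From mathcomp Require Import all_boot all_order all_algebra.
Set Implicit Arguments. Unset Strict Implicit. Unset Printing Implicit Defensive.
Import GRing.Theory.
Local Open Scope ring_scope.

Section LeibnizDefs.
Variables (F : fieldType) (Q : lmodType F) (br : Q -> Q -> Q).

Definition bilinear_bracket : Prop :=
  (forall (a : F) (x y z : Q), br (a *: x + y) z = a *: br x z + br y z) /\
  (forall (a : F) (x y z : Q), br z (a *: x + y) = a *: br z x + br z y).

Definition right_leibniz : Prop :=
  forall x y z : Q, br x (br y z) = br (br x y) z - br (br x z) y.

Definition subspace (S : Q -> Prop) : Prop :=
  S 0 /\ forall (a : F) (x y : Q), S x -> S y -> S (a *: x + y).

Definition subalgebra (L : Q -> Prop) : Prop :=
  subspace L /\ forall x y, L x -> L y -> L (br x y).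

Definition ideal_of (L I : Q -> Prop) : Prop :=
  subspace I /\ (forall x, I x -> L x) /\
  (forall x y, I x -> L y -> I (br x y)) /\
  (forall x y, L x -> I y -> I (br x y)).

(* membership in the associative algebra A(L) generated (as an algebra of
   operators on Q) by the R_x : u |-> [u,x] and L_y : u |-> [y,u], x,y in L *)
Inductive inAL (L : Q -> Prop) : (Q -> Q) -> Prop :=
| AL_R x : L x -> inAL L (fun u => br u x)
| AL_L y : L y -> inAL L (fun u => br y u)
| AL_add f g : inAL L f -> inAL L g -> inAL L (fun u => f u + g u)
| AL_scale (a : F) f : inAL L f -> inAL L (fun u => a *: f u)
| AL_comp f g : inAL L f -> inAL L g -> inAL L (fun u => f (g u)).

Definition genL (L : Q -> Prop) (q : Q) (u : Q) : Prop :=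
  exists (a : F) (n : nat) (xi : 'I_n -> Q -> Q),
    (forall i, inAL L (xi i)) /\ u = a *: q + \sum_(i < n) xi i q.

Definition colon (L : Q -> Prop) (q : Q) (x : Q) : Prop :=
  L x /\ forall u, genL L q u -> L (br x u) /\ L (br u x).

End LeibnizDefs.

(** By the right Leibniz identity, for y in L the brackets of a with [v,y] and
    [y,v] agree modulo L with brackets of v with [a,y] and [y,a], as soon as
    [a,v] and [v,a] lie in L. Hence if v brackets a set A into L and A is
    stable under bracketing with L, then so do [v,y] and [y,v]. With A = _L(q),
    which is stable under A(L), this makes (L:q) an ideal; with A = I, it shows
    that the vectors bracketing I into L form a subspace containing q and
    stable under A(L), hence containing _L(q). *)

From HB Require Import structures.
From mathcomp Require Import all_boot all_order all_algebra.
Set Implicit Arguments. Unset Strict Implicit. Unset Printing Implicit Defensive.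
Import GRing.Theory.
Local Open Scope ring_scope.

Lemma additive0 (V W : zmodType) (f : V -> W) : {morph f : x y / x + y} -> f 0 = 0.
Proof. by move=> fD; apply: (addrI (f 0)); rewrite -fD !addr0. Qed.

Section Subspace.
Variables (F : fieldType) (Q : lmodType F) (S : Q -> Prop).
Hypothesis subS : subspace S.

Lemma subspace0 : S 0.
Proof. exact: subS.1. Qed.

Lemma subspaceD x y : S x -> S y -> S (x + y).
Proof. by move=> Sx Sy; rewrite -[x]scale1r; apply: subS.2. Qed.

Lemma subspaceZ a x : S x -> S (a *: x).
Proof. by move=> Sx; rewrite -[_ *: x]addr0; apply: subS.2 => //; exact: subspace0. Qed.

Lemma subspaceN x : S (- x) <-> S x.
Proof.
by split=> [/(subspaceZ (-1))|/(subspaceZ (-1))]; rewrite scaleN1r ?opprK.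
Qed.

Lemma subspace_sum n (f : 'I_n -> Q) : (forall i, S (f i)) -> S (\sum_(i < n) f i).
Proof. by move=> Sf; apply: big_ind => //; [exact: subspace0 | exact: subspaceD]. Qed.

Lemma subspace_iffD x y : S (x + y) -> S x <-> S y.
Proof.
move=> Sxy; split=> [Sx|Sy].
  by rewrite -(addKr x y); apply: subspaceD => //; apply/subspaceN.
by rewrite -(addrK y x); apply: subspaceD => //; apply/subspaceN.
Qed.

Lemma subspace_iffB x y : S (x - y) -> S x <-> S y.
Proof.
move=> Sxy; have [SxN SNx] := subspace_iffD Sxy.
by split=> [/SxN/subspaceN | /subspaceN].
Qed.

End Subspace.

Lemma subspaceI (F : fieldType) (Q : lmodType F) (S T : Q -> Prop) :
  subspace S -> subspace T -> subspace (fun x => S x /\ T x).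
Proof.
move=> subS subT; split; first by split; apply: subspace0.
by move=> a x y [Sx Tx] [Sy Ty]; split; [apply: subS.2 | apply: subT.2].
Qed.

Section Bracket.
Variables (F : fieldType) (Q : lmodType F) (br : Q -> Q -> Q).
Hypothesis brB : bilinear_bracket br.

Lemma brDl z : {morph br^~ z : x y / x + y}.
Proof. by move=> x y /=; rewrite -[x]scale1r brB.1 !scale1r. Qed.

Lemma brDr z : {morph br z : x y / x + y}.
Proof. by move=> x y; rewrite -[x]scale1r brB.2 !scale1r. Qed.

Lemma br0l z : br 0 z = 0.
Proof. exact: additive0 (brDl z). Qed.

Lemma br0r z : br z 0 = 0.
Proof. exact: additive0 (brDr z). Qed.

Section Generated.
Variables (L : Q -> Prop) (q : Q).

Lemma inAL_linear xi : inAL br L xi -> forall a x y, xi (a *: x + y) = a *: xi x + xi y.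
Proof.
elim=> {xi} [z _|z _|f g _ IHf _ IHg|b f _ IHf|f g _ IHf _ IHg] a x y /=.
- exact: brB.1.
- exact: brB.2.
- by rewrite IHf IHg scalerDr addrACA.
- by rewrite IHf scalerDr !scalerA mulrC.
- by rewrite IHg IHf.
Qed.

Lemma inAL_sum xi n (f : 'I_n -> Q) :
  inAL br L xi -> xi (\sum_(i < n) f i) = \sum_(i < n) xi (f i).
Proof.
move=> ALxi; have xiD : {morph xi : x y / x + y}.
  by move=> x y; rewrite -[x]scale1r inAL_linear // !scale1r.
by rewrite (big_morph xi xiD (additive0 xiD)).
Qed.

Lemma inAL_stable (S : Q -> Prop) xi v : subspace S ->
  (forall y w, L y -> S w -> S (br w y) /\ S (br y w)) ->
  inAL br L xi -> S v -> S (xi v).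
Proof.
move=> subS Sbr ALxi.
elim: ALxi v => {xi} [y Ly|y Ly|f g _ IHf _ IHg|a f _ IHf|f g _ IHf _ IHg] v Sv /=.
- exact: (Sbr y v Ly Sv).1.
- exact: (Sbr y v Ly Sv).2.
- by apply: subspaceD => //; [exact: IHf | exact: IHg].
- by apply: subspaceZ => //; exact: IHf.
- exact/IHf/IHg.
Qed.

Lemma genL_subspace : subspace (genL br L q).
Proof.
split; first by exists 0, 0, (fun _ v => v); split; [case | rewrite scale0r big_ord0 addr0].
move=> a _ _ [a1 [n1 [f1 [AL1 ->]]]] [a2 [n2 [f2 [AL2 ->]]]].
pose g i := match split i with inl j => fun v => a *: f1 j v | inr k => f2 k end.
exists (a * a1 + a2), (n1 + n2), g; split.
  by move=> i; rewrite /g; case: (split i) => j; [exact: AL_scale | exact: AL2].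
rewrite big_split_ord /g scalerDr scalerDl -scalerA scaler_sumr addrACA.
congr (_ + (_ + _)); apply: eq_bigr => i _.
  by rewrite (unsplitK (inl i)).
by rewrite (unsplitK (inr i)).
Qed.

Lemma genL_op xi : inAL br L xi -> genL br L q (xi q).
Proof. by exists 0, 1, (fun _ => xi); rewrite scale0r add0r big_ord1. Qed.

Lemma genL_inAL xi u : inAL br L xi -> genL br L q u -> genL br L q (xi u).
Proof.
move=> ALxi [a [n [f [ALf ->]]]]; rewrite inAL_linear // inAL_sum //.
apply: genL_subspace.2; first exact: genL_op.
apply: subspace_sum; first exact: genL_subspace.
by move=> i; exact: genL_op (AL_comp ALxi (ALf i)).
Qed.

Lemma genL_br u y : genL br L q u -> L y ->
  genL br L q (br u y) /\ genL br L q (br y u).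
Proof.
by move=> Gu Ly; split; [apply: genL_inAL (AL_R br Ly) Gu | apply: genL_inAL (AL_L br Ly) Gu].
Qed.

Lemma genL_min (S : Q -> Prop) u : subspace S -> S q ->
  (forall y v, L y -> S v -> S (br v y) /\ S (br y v)) ->
  genL br L q u -> S u.
Proof.
move=> subS Sq Sbr [a [n [f [ALf ->]]]]; apply: subS.2 => //.
by apply: subspace_sum => // i; exact: inAL_stable subS Sbr (ALf i) Sq.
Qed.

End Generated.
End Bracket.

Section Leibniz.
Variables (F : fieldType) (Q : lmodType F) (br : Q -> Q -> Q).
Hypotheses (brB : bilinear_bracket br) (brL : right_leibniz br).

Lemma br_brC x y z : br x (br y z) = - br x (br z y).
Proof. by rewrite !brL opprB. Qed.

Variable L : Q -> Prop.
Hypothesis subL : subalgebra br L.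

Lemma subalg_brA x y u : L y -> L (br x u) ->
  L (br x (br y u)) <-> L (br (br x y) u).
Proof.
move=> Ly Lxu; apply: (subspace_iffB subL.1).
by rewrite brL addrAC subrr add0r; apply/(subspaceN subL.1)/subL.2.
Qed.

Lemma subalg_brAC x y u : L y -> L (br x u) ->
  L (br (br y x) u) <-> L (br (br y u) x).
Proof. by move=> Ly Lxu; apply: (subspace_iffB subL.1); rewrite -brL; apply: subL.2. Qed.

Definition brackets_into (A : Q -> Prop) (v : Q) :=
  forall a, A a -> L (br v a) /\ L (br a v).

Lemma brackets_into_subspace A : subspace (brackets_into A).
Proof.
split=> [a _|c v w Av Aw a Aa]; first by rewrite (br0l brB) (br0r brB); split; exact: subL.1.1.
have [Lva Lav] := Av a Aa; have [Lwa Law] := Aw a Aa.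
by rewrite brB.1 brB.2; split; apply: subL.1.2.
Qed.

Lemma brackets_into_br A y v :
  (forall a z, A a -> L z -> A (br a z) /\ A (br z a)) -> L y ->
  brackets_into A v -> brackets_into A (br v y) /\ brackets_into A (br y v).
Proof.
move=> Abr Ly Av; split=> a Aa; have [Lva Lav] := Av a Aa;
  have [Aay Aya] := Abr a y Aa Ly; split.
- by apply/subalg_brA => //; exact: (Av _ Aya).1.
- by rewrite br_brC; apply/(subspaceN subL.1)/subalg_brA => //; exact: (Av _ Aay).2.
- by apply/subalg_brAC => //; exact: (Av _ Aya).2.
- by apply/subalg_brA => //; exact: (Av _ Aay).2.
Qed.

Variable q : Q.

Lemma colon_ideal : ideal_of br L (colon br L q).
Proof.
split; first exact: subspaceI subL.1 (brackets_into_subspace _).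
split; first by move=> x [].
split=> [x y [Lx Gx] Ly | x y Lx [Ly Gy]]; split; first exact: subL.2.
- exact: (brackets_into_br (genL_br brB (q:=q)) Ly Gx).1.
- exact: subL.2.
- exact: (brackets_into_br (genL_br brB (q:=q)) Lx Gy).2.
Qed.

Lemma colon_max I : ideal_of br L I ->
  (forall x, I x -> L (br x q) /\ L (br q x)) -> forall x, I x -> colon br L q x.
Proof.
move=> [_ [IL [IbrL IbrR]]] Iq x Ix; split; first exact: IL.
move=> u Gu; suff /(_ x Ix) [] : brackets_into I u by split.
apply: (genL_min (brackets_into_subspace I) _ _ Gu); first by move=> a /Iq [].
move=> y v Ly; apply: brackets_into_br Ly => a z Ia Lz.
by split; [exact: IbrL | exact: IbrR].
Qed.

End Leibniz.

Theorem proposition3p1 (F : fieldType) (Q : lmodType F) (br : Q -> Q -> Q)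
  (Hbil : bilinear_bracket br) (Hleib : right_leibniz br)
  (L : Q -> Prop) (HL : subalgebra br L) (q : Q) :
  ideal_of br L (colon br L q) /\
  (forall I : Q -> Prop, ideal_of br L I ->
     (forall x, I x -> L (br x q) /\ L (br q x)) ->
     forall x, I x -> colon br L q x).
Proof. by split; [exact: colon_ideal | exact: colon_max]. Qed.
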